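(* Let $G$ be a finite simple graph, let $\alpha=\alpha(G)$, for $1\le j\le\alpha$ let $g_j$ be the number of independent sets of $G$ of cardinality $j$, and let $g=\sum_{j=1}^{\alpha}(-1)^{j-1}g_j$. Then $\deg h_{R/I(G)}(t)=\alpha(G)$ if and only if $g\neq 1$.
   Context: An independent set of $G$ is a set of vertices no two of which are adjacent; $\alpha(G)$ is the maximum size of an independent set. For $G$ on vertices $x_1,\dots,x_n$, $R=k[x_1,\dots,x_n]$ over a field $k$, $I(G)=(x_ix_j:\{x_i,x_j\}\in E(G))$, and $h_{R/I(G)}(t)$ is the numerator of the Hilbert series $\sum_i\dim_k(R/I(G))_it^i$ written as a reduced fraction $h_{R/I(G)}(t)/(1-t)^{\dim R/I(G)}$. *)

From HB Require Import structures.
From mathcomp Require Import all_boot all_order all_algebra.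
From mathcomp Require Import mpoly.
Set Implicit Arguments. Unset Strict Implicit. Unset Printing Implicit Defensive.
Import Order.TTheory GRing.Theory Num.Theory.
Local Open Scope ring_scope.

(* A finite simple graph on the vertex set 'I_n (vertex i <-> variable x_i):
   an irreflexive symmetric adjacency relation. *)
Definition simple_graph (n : nat) (e : rel 'I_n) : Prop :=
  irreflexive e /\ (forall x y : 'I_n, e x y = e y x).

Definition independent (n : nat) (e : rel 'I_n) (A : {set 'I_n}) : bool :=
  [forall x in A, forall y in A, ~~ e x y].

Definition alpha (n : nat) (e : rel 'I_n) : nat :=
  (\max_(A : {set 'I_n} | independent e A) #|A|)%N.

Definition indep_count (n : nat) (e : rel 'I_n) (j : nat) : nat :=
  #|[set A : {set 'I_n} | independent e A & #|A| == j]|.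

Definition gsum (n : nat) (e : rel 'I_n) : int :=
  \sum_(1 <= j < (alpha e).+1) (-1) ^+ (j.-1) * (indep_count e j)%:Z.

Definition in_edge_ideal (k : fieldType) (n : nat) (e : rel 'I_n)
    (p : {mpoly k[n]}) : Prop :=
  exists q : 'I_n -> 'I_n -> {mpoly k[n]},
    p = \sum_(u : 'I_n) \sum_(v : 'I_n | e u v) q u v * ('X_u * 'X_v).

(* standard grading: p lies in R_i (homogeneous of degree i w.r.t. mdeg;
   0 counts as homogeneous of every degree) *)
Definition homog_of_deg (k : fieldType) (n : nat) (i : nat)
    (p : {mpoly k[n]}) : bool :=
  p \is @ishomog1 n k i mdeg.

(* dim_k (R/I(G))_i = m : since I(G) is homogeneous, (R/I)_i = R_i/(I cap R_i),
   and its dimension is m iff there are m elements of R_i linearly independent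
   modulo I(G) and any m+1 elements of R_i are linearly dependent modulo I(G). *)
Definition hilbert_fn_is (k : fieldType) (n : nat) (e : rel 'I_n)
    (i m : nat) : Prop :=
  (exists ps : 'I_m -> {mpoly k[n]},
     (forall j, homog_of_deg i (ps j)) /\
     (forall c : 'I_m -> k,
        in_edge_ideal e (\sum_j c j *: ps j) -> forall j, c j = 0))
  /\
  (forall ps : 'I_m.+1 -> {mpoly k[n]},
     (forall j, homog_of_deg i (ps j)) ->
     exists c : 'I_m.+1 -> k,
       in_edge_ideal e (\sum_j c j *: ps j) /\ exists j, c j != 0).

(* The Hilbert series sum_i H(i) t^i equals h(t)/(1-t)^d (as formal power
   series), i.e. h(t) = (1-t)^d * sum_i H(i) t^i coefficientwise,
   and the fraction is reduced: h coprime to (1-t)^d. *)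
Definition hilbert_numerator (k : fieldType) (n : nat) (e : rel 'I_n)
    (h : {poly rat}) (d : nat) : Prop :=
  exists H : nat -> nat,
    (forall i, hilbert_fn_is k e i (H i)) /\
    (forall i : nat,
       h`_i = \sum_(j < i.+1) ((1 - 'X) ^+ d : {poly rat})`_j * (H (i - j)%N)%:R) /\
    coprimep h ((1 - 'X) ^+ d).

From HB Require Import structures.
From mathcomp Require Import all_boot all_order all_algebra.
From mathcomp Require Import mpoly.
Set Implicit Arguments.
Unset Strict Implicit.
Unset Printing Implicit Defensive.
Import Order.TTheory GRing.Theory Num.Theory.
Local Open Scope ring_scope.

(* The standard monomials, those whose support is an independent
   set, form a basis of k[x]/I(G); hence its Hilbert series is the sum over
   independent sets F of (t/(1-t))^|F|, i.e. Q(t)/(1-t)^alpha with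
   Q(t) = sum_F t^|F| (1-t)^(alpha-|F|).  Since Q(1) counts the maximum
   independent sets, this fraction is reduced, so h = Q.  Now deg Q <= alpha
   and the coefficient of t^alpha in Q is (-1)^alpha sum_F (-1)^|F|
   = (-1)^alpha (1 - g).  Series identities are checked modulo t^(B+1), where
   t + t^2 + ... + t^B stands for t/(1-t). *)

Lemma size_1subX (R : nzRingType) : size (1 - 'X : {poly R}) = 2.
Proof. by rewrite -opprB size_polyN -polyC1 size_XsubC. Qed.

Lemma lead_coef_1subX (R : nzRingType) : lead_coef (1 - 'X : {poly R}) = -1.
Proof. by rewrite -opprB lead_coefN -polyC1 lead_coefXsubC. Qed.

Section DomainPolynomials.
Variable R : idomainType.
Implicit Types p q : {poly R}.

Lemma dvdp_Xn_coef0 N p : (forall i, (i < N)%N -> p`_i = 0) -> 'X^N %| p.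
Proof.
move=> p_lt0; rewrite -(poly_take_drop N p).
have -> : take_poly N p = 0.
  by apply/polyP => i; rewrite coef_take_poly coef0; case: ifP => // /p_lt0.
by rewrite add0r dvdp_mull.
Qed.

Lemma dvdp_all_Xn_eq0 p : (forall N, 'X^(N.+1) %| p) -> p = 0.
Proof.
move=> dvdXp; apply/eqP/negPn/negP => /dvdp_leq/(_ (dvdXp (size p))).
by rewrite size_polyXn ltnNge leqW.
Qed.

Lemma dvdp_subrXX d p q k : d %| p - q -> d %| p ^+ k - q ^+ k.
Proof. by move=> dvd_pq; rewrite subrXX dvdp_mulr. Qed.

Lemma dvdp_sumB (I : finType) (P : pred I) d (F G : I -> {poly R}) :
  (forall i, P i -> d %| F i - G i) -> d %| \sum_(i | P i) F i - \sum_(i | P i) G i.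
Proof.
move=> dvdFG; rewrite -sumrB; elim/big_rec: _ => [|i s Pi dvd_s].
  exact: dvdp0.
by rewrite dvdp_add ?dvdFG.
Qed.

Lemma reduced_fraction_eq (r h q : {poly R}) a b :
  (1 < size r)%N -> coprimep h (r ^+ b) -> coprimep q r ->
  r ^+ a * h = r ^+ b * q -> h = q.
Proof.
move=> r_gt1 cop_h cop_q.
have r_neq0 c : r ^+ c != 0 by rewrite expf_neq0 // -size_poly_gt0 ltnW.
have coprime_mul_pow c x : (0 < c)%N -> ~~ coprimep (r ^+ c * x) r.
  by move=> c_gt0; rewrite coprimepMl coprimep_sym coprimep_pexpr // coprimepp gtn_eqF.
have [le_ab|lt_ba] := leqP a b.
  rewrite -(subnKC le_ab) exprD -mulrA => /(mulfI (r_neq0 a)) hE.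
  move: cop_h; rewrite hE; case E: (b - a)%N => [|c]; first by rewrite mul1r.
  have b_gt0 : (0 < b)%N by apply: leq_trans (leq_subr a b); rewrite E.
  by rewrite coprimep_pexpr // (negbTE (coprime_mul_pow _ _ _)).
rewrite -(subnKC (ltnW lt_ba)) exprD -mulrA => /(mulfI (r_neq0 b)) qE.
by move: cop_q; rewrite -qE (negbTE (coprime_mul_pow _ _ _)) // subn_gt0.
Qed.

Lemma coef_1subX_exp m : ((1 - 'X) ^+ m : {poly R})`_m = (-1) ^+ m.
Proof.
have size_m := size_exp (1 - 'X : {poly R}) m; rewrite size_1subX mul1n in size_m.
by rewrite -{2}size_m -lead_coefE lead_coef_exp lead_coef_1subX.
Qed.

Lemma deg_eq_coef p k :
  p != 0 -> (size p <= k.+1)%N -> ((size p).-1 = k <-> p`_k != 0).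
Proof.
move=> p_neq0 size_p; split => [<-|pk_neq0].
  by rewrite -lead_coefE lead_coef_eq0.
apply/eqP; rewrite eqn_leq -ltnS -(polySpred p_neq0) size_p /=.
by rewrite -ltnS -(polySpred p_neq0) ltnNge; apply: contra pk_neq0 => /leq_sizeP ->.
Qed.

End DomainPolynomials.

Definition Xgeom {R : nzRingType} (B : nat) : {poly R} := \sum_(1 <= j < B.+1) 'X^j.

Lemma mul1subX_Xgeom (R : nzRingType) B : (1 - 'X) * Xgeom B = 'X - 'X^(B.+1) :> {poly R}.
Proof.
rewrite mulr_sumr (eq_bigr (fun j => - 'X^(j.+1) - - 'X^j)); last first.
  by move=> j _; rewrite mulrBl mul1r -exprS opprK addrC.
by rewrite telescope_sumr // expr1 opprK addrC.
Qed.

Section Graph.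
Variables (n : nat) (e : rel 'I_n).

Definition mnm_supp (m : 'X_{1..n}) : {set 'I_n} := [set v | m v != 0%N].

(* The monomials outside the monomial ideal I(G). *)
Definition standard (m : 'X_{1..n}) : bool := independent e (mnm_supp m).

Lemma standardP (m : 'X_{1..n}) :
  reflect (forall u v, e u v -> (m u == 0%N) || (m v == 0%N)) (standard m).
Proof.
apply: (iffP forallP) => [std u v euv|std u].
  have := std u; rewrite inE; case: eqP => //= _ /forallP/(_ v).
  by rewrite inE euv implybF negbK.
apply/implyP; rewrite inE => mu; apply/forallP => v; apply/implyP; rewrite inE => mv.
by apply/negP => /(std u v); rewrite (negbTE mu) (negbTE mv).
Qed.

Definition mnm_of {B} (f : {ffun 'I_n -> 'I_B}) : 'X_{1..n} :=
  [multinom (f v : nat) | v < n].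

Lemma mnm_of_inj B : injective (@mnm_of B).
Proof.
by move=> f g /mnmP fg; apply/ffunP => v; apply/val_inj; move: (fg v); rewrite !mnmE.
Qed.

Lemma mnm_of_inord B (m : 'X_{1..n}) :
  (mdeg m <= B)%N -> mnm_of [ffun v => inord (m v) : 'I_B.+1] = m.
Proof.
move=> le_mB; apply/mnmP => v; rewrite mnmE ffunE inordK // ltnS.
by apply: leq_trans le_mB; rewrite mdegE (bigD1 v) //= leq_addr.
Qed.

(* For i <= B these exponent vectors are exactly the standard monomials of degree i. *)
Definition std_mnms B i : {set {ffun 'I_n -> 'I_B.+1}} :=
  [set f | (mdeg (mnm_of f) == i) && standard (mnm_of f)].

Section Coefficients.
Variable k : fieldType.
Implicit Type p : {mpoly k[n]}.

Lemma edge_ideal_coef_standard p m : in_edge_ideal e p -> standard m -> p@_m = 0.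
Proof.
move=> [q ->] /standardP std_m; rewrite raddf_sum big1 // => u _.
rewrite raddf_sum big1 // => v euv; rewrite -mpolyXD.
apply/eqP; rewrite mcoeff_eq0; apply/negP => m_supp.
have := perm_mem (msuppMX (q u v) (U_(u) + U_(v))%MM) m.
rewrite m_supp => /esym/mapP [m' _ mE].
by move: (std_m u v euv); rewrite mE !mnmDE !mnm1E !eqxx !addn_eq0 andbF.
Qed.

Lemma edge_ideal0 : in_edge_ideal e (0 : {mpoly k[n]}).
Proof.
by exists (fun _ _ => 0); rewrite big1 // => u _; rewrite big1 // => v _; rewrite mul0r.
Qed.

Lemma edge_idealD p q :
  in_edge_ideal e p -> in_edge_ideal e q -> in_edge_ideal e (p + q).
Proof.
move=> [qp ->] [qq ->]; exists (fun u v => qp u v + qq u v).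
rewrite -big_split; apply: eq_bigr => u _; rewrite -big_split.
by apply: eq_bigr => v _; rewrite mulrDl.
Qed.

Lemma edge_ideal_mul_edge u v p : e u v -> in_edge_ideal e (p * ('X_u * 'X_v)).
Proof.
move=> euv; exists (fun a b => if (a == u) && (b == v) then p else 0).
rewrite (bigD1 u) //= (bigD1 v) //= !eqxx big1 ?addr0 => [|b /andP [_ /negbTE->]].
  rewrite [X in _ = _ + X]big1 ?addr0 // => a /negbTE au.
  by rewrite big1 // => b _; rewrite au mul0r.
by rewrite andbF mul0r.
Qed.

Lemma edge_ideal_of_coef_standard p :
  irreflexive e -> (forall m, standard m -> p@_m = 0) -> in_edge_ideal e p.
Proof.
move=> irr p_std; rewrite (mpolyE p) big_seq.
apply: (big_ind (in_edge_ideal e)); [exact: edge_ideal0 | exact: edge_idealD|].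
move=> m m_supp; have : ~~ standard m.
  by apply: contraL m_supp => /p_std; rewrite mcoeff_msupp => ->; rewrite eqxx.
rewrite negb_forall => /existsP [u]; rewrite negb_imply inE => /andP [mu].
rewrite negb_forall => /existsP [v]; rewrite negb_imply inE negbK => /andP [mv euv].
have uv : u != v by apply: contraTneq euv => ->; rewrite irr.
have le_m : (U_(u) + U_(v) <= m)%MM.
  apply/mnm_lepP => w; rewrite mnmDE !mnm1E.
  have [<-|_] := eqVneq u w; first by rewrite eq_sym (negbTE uv) lt0n.
  by have [<-|_] := eqVneq v w; rewrite ?lt0n.
rewrite -(submK le_m) mpolyXD mpolyXD scalerAl.
exact: edge_ideal_mul_edge.
Qed.

Section HilbertFunction.
Variables (B i : nat).

Definition std_basis {M} (le_M : (M <= #|std_mnms B i|)%N) (j : 'I_M) : {mpoly k[n]} :=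
  'X_[mnm_of (enum_val (widen_ord le_M j))].

Lemma std_basis_homog {M} (le_M : (M <= #|std_mnms B i|)%N) j :
  homog_of_deg i (std_basis le_M j).
Proof.
rewrite /homog_of_deg dhomogX /=.
by have := enum_valP (widen_ord le_M j); rewrite inE => /andP [].
Qed.

Lemma std_basis_free {M} (le_M : (M <= #|std_mnms B i|)%N) (c : 'I_M -> k) :
  in_edge_ideal e (\sum_j c j *: std_basis le_M j) -> forall j, c j = 0.
Proof.
move=> c_ideal j.
have std_j : standard (mnm_of (enum_val (widen_ord le_M j))).
  by have := enum_valP (widen_ord le_M j); rewrite inE => /andP [].
have := edge_ideal_coef_standard c_ideal std_j.
rewrite raddf_sum (bigD1 j) //= mcoeffZ mcoeffX eqxx mulr1 big1 ?addr0 // => j' j'j.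
rewrite mcoeffZ mcoeffX; case: eqP => [/mnm_of_inj/enum_val_inj|_]; last by rewrite mulr0.
by move/(congr1 val) => /= /val_inj j'E; rewrite j'E eqxx in j'j.
Qed.

Lemma homog_dependent_mod_edge_ideal M (ps : 'I_M -> {mpoly k[n]}) :
  irreflexive e -> (i <= B)%N -> (#|std_mnms B i| < M)%N ->
  (forall j, homog_of_deg i (ps j)) ->
  exists c : 'I_M -> k, in_edge_ideal e (\sum_j c j *: ps j) /\ exists j, c j != 0.
Proof.
move=> irr le_iB lt_M ps_homog.
(* A row of the kernel of the matrix of standard coefficients gives the dependency. *)
pose A := \matrix_(j < M, l < #|std_mnms B i|) (ps j)@_(mnm_of (enum_val l)).
have /matrix0Pn [r [j0 ker_j0]] : kermx A != 0.
  rewrite kermx_eq0 /row_free; apply: contraTneq lt_M => <-.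
  by rewrite -leqNgt rank_leq_col.
exists (fun j => kermx A r j); split; last by exists j0.
apply: edge_ideal_of_coef_standard => // m std_m; rewrite raddf_sum /=.
have [deg_m|deg_m] := eqVneq (mdeg m) i; last first.
  by rewrite big1 // => j _; rewrite mcoeffZ (dhomog_nemf_coeff (ps_homog j) deg_m) mulr0.
pose f : {ffun 'I_n -> 'I_B.+1} := [ffun v => inord (m v)].
have fm : mnm_of f = m by rewrite mnm_of_inord // deg_m.
have f_std : f \in std_mnms B i by rewrite inE fm deg_m eqxx.
have : (kermx A *m A) r (enum_rank_in f_std f) = 0 by rewrite mulmx_ker mxE.
rewrite mxE => ker_f; rewrite -[RHS]ker_f; apply: eq_bigr => j _.
by rewrite mcoeffZ [A _ _]mxE enum_rankK_in // fm.
Qed.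

Lemma hilbert_fn_std_mnms m :
  irreflexive e -> (i <= B)%N -> hilbert_fn_is k e i m -> m = #|std_mnms B i|.
Proof.
move=> irr le_iB [[ps [ps_homog ps_free]] dependent].
have [lt_m|le_m] := ltnP #|std_mnms B i| m.
  have [c [c_ideal [j cj]]] := homog_dependent_mod_edge_ideal irr le_iB lt_m ps_homog.
  by rewrite (ps_free c c_ideal j) eqxx in cj.
move: le_m; rewrite leq_eqVlt => /orP [/eqP //|lt_m].
have [c [c_ideal [j cj]]] := dependent _ (std_basis_homog lt_m).
by rewrite (std_basis_free c_ideal j) eqxx in cj.
Qed.

End HilbertFunction.
End Coefficients.

Lemma independent_le_alpha F : independent e F -> (#|F| <= alpha e)%N.
Proof. exact: leq_bigmax_cond. Qed.

Lemma alpha_attained : exists2 F, independent e F & #|F| = alpha e.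
Proof.
have indep_exists : (0 < #|[pred F : {set 'I_n} | independent e F]|)%N.
  by apply/card_gt0P; exists set0; apply/forall_inP => x; rewrite inE.
have [F indepF maxF] := eq_bigmax_cond (fun F : {set 'I_n} => #|F|) indep_exists.
by exists F; rewrite // /alpha -maxF.
Qed.

Lemma sum_indep_sign (R : nzRingType) :
  \sum_(F | independent e F) (-1) ^+ #|F| = 1 - (gsum e)%:~R :> R.
Proof.
have by_size : \sum_(F | independent e F) (-1) ^+ #|F| =
    \sum_(j < (alpha e).+1) (-1) ^+ j * (indep_count e j)%:R :> R.
  rewrite (partition_big (fun F : {set 'I_n} => inord #|F| : 'I_(alpha e).+1) predT) //=.
  apply: eq_bigr => j _; rewrite /indep_count -sum1_card natr_sum mulr_sumr.
  apply: eq_big => F; rewrite ?inE.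
    case: (boolP (independent e F)) => //= indepF.
    by rewrite -val_eqE /= inordK // ltnS independent_le_alpha.
  by move=> /andP [indepF /eqP <-]; rewrite inordK ?mulr1 // ltnS independent_le_alpha.
have count0 : indep_count e 0 = 1%N.
  rewrite /indep_count (_ : [set A | _] = [set set0]) ?cards1 //.
  apply/setP => F; rewrite !inE cards_eq0; case: eqP => [->|]; last by rewrite andbF.
  by rewrite andbT; apply/forall_inP => x; rewrite inE.
rewrite by_size big_ord_recl count0 expr0 mulr1; congr (_ + _).
rewrite /gsum rmorph_sum big_add1 big_mkord -sumrN; apply: eq_bigr => j _.
by rewrite rmorphM rmorphXn rmorphN1 exprS mulN1r mulNr.
Qed.

(* Agrees with the Hilbert series of k[x]/I(G) below degree B + 1. *)
Definition hilbert_gen {R : comNzRingType} B : {poly R} :=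
  \sum_(F : {set 'I_n} | independent e F) Xgeom B ^+ #|F|.

(* The numerator of the Hilbert series of k[x]/I(G). *)
Definition indep_hpoly {R : comNzRingType} : {poly R} :=
  \sum_(F : {set 'I_n} | independent e F) 'X^#|F| * (1 - 'X) ^+ (alpha e - #|F|).

Section Ring.
Variable R : comNzRingType.

Lemma sum_mnm_supp B (F : {set 'I_n}) :
  \sum_(f : {ffun 'I_n -> 'I_B.+1} | mnm_supp (mnm_of f) == F) 'X^(mdeg (mnm_of f))
  = Xgeom B ^+ #|F| :> {poly R}.
Proof.
pose Q v := [pred j : 'I_B.+1 | (j != 0 :> nat) == (v \in F)].
have factor v : \sum_(j | Q v j) 'X^j = if v \in F then Xgeom B else 1 :> {poly R}.
  rewrite big_mkcond big_ord_recl /Q /Xgeom big_add1 big_mkord /=.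
  by case: (v \in F); rewrite /= ?add0r // big1 ?addr0.
rewrite -prodr_const [RHS]big_mkcond -(eq_bigr _ (fun v _ => factor v)) bigA_distr_big_dep.
apply: eq_big => f.
  apply/eqP/familyP => [fF v|Qf]; first by rewrite inE -fF inE mnmE.
  by apply/setP => v; move: (Qf v); rewrite !inE mnmE => /eqP.
by move=> _; rewrite prodrXr mdegE; congr 'X^_; apply: eq_bigr => v _; rewrite mnmE.
Qed.

Lemma sum_standard_mnms B :
  \sum_(f : {ffun 'I_n -> 'I_B.+1} | standard (mnm_of f)) 'X^(mdeg (mnm_of f))
  = hilbert_gen B :> {poly R}.
Proof.
rewrite (partition_big (fun f => mnm_supp (mnm_of f)) (independent e)) //=.
apply: eq_bigr => F indepF; rewrite -sum_mnm_supp; apply: eq_bigl => f.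
by rewrite /standard; case: eqP => [->|]; rewrite ?indepF ?andbF.
Qed.

Lemma coef_hilbert_gen B i : (hilbert_gen B : {poly R})`_i = #|std_mnms B i|%:R.
Proof.
rewrite -sum_standard_mnms coef_sum -sum1_card natr_sum big_mkcond [RHS]big_mkcond.
apply: eq_bigr => f _; rewrite inE coefXn eq_sym.
by case: (standard _); rewrite ?andbT ?andbF //; case: eqP.
Qed.

Lemma indep_hpoly_at1 :
  (indep_hpoly : {poly R}).[1] = #|[set F | independent e F & #|F| == alpha e]|%:R.
Proof.
rewrite horner_sum -sum1_card natr_sum big_mkcond [RHS]big_mkcond.
apply: eq_bigr => F _; rewrite inE; case: (boolP (independent e F)) => //= indepF.
rewrite hornerM hornerXn expr1n mul1r horner_exp !hornerE subrr expr0n subn_eq0.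
by rewrite eqn_leq independent_le_alpha //=; case: leqP.
Qed.

End Ring.

Section Domain.
Variable R : idomainType.

Lemma dvdp_hilbert_gen B :
  'X^(B.+1) %| (1 - 'X) ^+ alpha e * hilbert_gen B - (indep_hpoly : {poly R}).
Proof.
rewrite mulr_sumr; apply: dvdp_sumB => F indepF.
rewrite -(subnK (independent_le_alpha indepF)) exprD -mulrA -exprMn mul1subX_Xgeom.
rewrite subnK ?independent_le_alpha // [X in _ - X]mulrC -mulrBr dvdp_mull //.
by apply: dvdp_subrXX; rewrite addrAC subrr add0r dvdpNr dvdpp.
Qed.

Lemma size_indep_hpoly : (size (indep_hpoly : {poly R}) <= (alpha e).+1)%N.
Proof.
apply: leq_trans (size_sum _ _ _) _; apply/bigmax_leqP => F indepF.
apply: leq_trans (size_polyMleq _ _) _; rewrite size_polyXn addSn /=.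
apply: leq_trans (leq_add (leqnn _) (size_poly_exp_leq _ _)) _.
by rewrite size_1subX mul1n addnS subnKC ?independent_le_alpha.
Qed.

Lemma coef_indep_hpoly_alpha :
  (indep_hpoly : {poly R})`_(alpha e) = (-1) ^+ alpha e * (1 - (gsum e)%:~R).
Proof.
rewrite -sum_indep_sign mulr_sumr coef_sum; apply: eq_bigr => F indepF.
have le_Fa := independent_le_alpha indepF.
rewrite coefXnM ltnNge le_Fa /= coef_1subX_exp.
by rewrite -signr_odd oddB // signr_addb !signr_odd.
Qed.

End Domain.

Section NumField.
Variable R : numFieldType.

Lemma indep_hpoly_at1_neq0 : (indep_hpoly : {poly R}).[1] != 0.
Proof.
rewrite indep_hpoly_at1 pnatr_eq0 -lt0n.
have [F indepF FE] := alpha_attained.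
by apply/card_gt0P; exists F; rewrite inE indepF FE eqxx.
Qed.

Lemma coprimep_indep_hpoly : coprimep (indep_hpoly : {poly R}) (1 - 'X).
Proof.
rewrite -opprB -scaleN1r coprimepZr ?oppr_eq0 ?oner_eq0 //.
by rewrite -polyC1 coprimep_XsubC /root indep_hpoly_at1_neq0.
Qed.

End NumField.
End Graph.

Section HilbertNumerator.
Variables (k : fieldType) (n : nat) (e : rel 'I_n) (h : {poly rat}) (d : nat).
Hypotheses (irr : irreflexive e) (h_num : hilbert_numerator k e h d).

Lemma dvdp_hilbert_numerator B : 'X^(B.+1) %| (1 - 'X) ^+ d * hilbert_gen e B - h.
Proof.
have [H [H_fn [hE _]]] := h_num; apply: dvdp_Xn_coef0 => i le_iB.
apply/eqP; rewrite coefB coefM hE subr_eq0; apply/eqP/eq_bigr => j _.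
by rewrite coef_hilbert_gen -(hilbert_fn_std_mnms irr _ (H_fn _)) // (leq_trans (leq_subr _ _)).
Qed.

Lemma hilbert_numerator_eq : (1 - 'X) ^+ alpha e * h = (1 - 'X) ^+ d * indep_hpoly e.
Proof.
apply/eqP; rewrite -subr_eq0; apply/eqP/dvdp_all_Xn_eq0 => B.
have -> : (1 - 'X) ^+ alpha e * h - (1 - 'X) ^+ d * indep_hpoly e =
    (1 - 'X) ^+ d * ((1 - 'X) ^+ alpha e * hilbert_gen e B - indep_hpoly e)
    - (1 - 'X) ^+ alpha e * ((1 - 'X) ^+ d * hilbert_gen e B - h).
  rewrite !mulrBr !mulrA [(1 - 'X) ^+ d * (1 - 'X) ^+ alpha e]mulrC.
  by rewrite opprB [RHS]addrC [RHS]addrA subrK.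
by rewrite dvdp_sub ?dvdp_mull ?dvdp_hilbert_gen ?dvdp_hilbert_numerator.
Qed.

End HilbertNumerator.

Theorem theorem3p2 (k : fieldType) (n : nat) (e : rel 'I_n)
    (h : {poly rat}) (d : nat) :
  simple_graph e ->
  hilbert_numerator k e h d ->
  ((size h).-1 = alpha e <-> gsum e != 1).
Proof.
move=> [irr _] h_num; have [_ [_ [_ h_coprime]]] := h_num.
have -> : h = indep_hpoly e.
  apply: (reduced_fraction_eq _ h_coprime (coprimep_indep_hpoly e rat)).
    by rewrite size_1subX.
  exact: hilbert_numerator_eq irr h_num.
have hpoly_neq0 : indep_hpoly e != 0 :> {poly rat}.
  by apply: contraNneq (indep_hpoly_at1_neq0 e rat) => ->; rewrite horner0.
rewrite deg_eq_coef ?size_indep_hpoly // coef_indep_hpoly_alpha.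
by rewrite mulf_eq0 signr_eq0 subr_eq0 eq_sym -[1]/(1%:~R) eqr_int.
Qed.
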